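(* Let $A\in\mathbb{R}^{n\times n}$ be Metzler, $J\in\mathbb{R}^{n\times n}$ nonnegative, $\bar T>0$, $d_h\in\mathbb{N}$, $\varepsilon>0$ and $\epsilon>0$. Assume there exist a polynomial vector $\zeta:\mathbb{R}\to\mathbb{R}^n$ of degree at most $d_h$ and vectors $\theta_{ij}\in\mathbb{R}^n$, for integers $i,j\ge0$ with $i+j\le d_h$, such that: (i) $\theta_{ij}\ge0$ for all such $i,j$; (ii) $\zeta(0)-\epsilon\mathbf{1}_n\ge0$; (iii) every component of the polynomial vector $-A^\top\zeta(\tau)+\dot\zeta(\tau)-\sum_{i+j\le d_h}\theta_{ij}\tau^i(\bar T-\tau)^j$, written in the monomial basis $1,\tau,\tau^2,\dots$, has only nonnegative coefficients; (iv) $-\zeta(\bar T)^\top J+\zeta(0)^\top-\varepsilon\mathbf{1}_n^\top\ge0$. Then $\zeta(\tau)^\top A-\dot\zeta(\tau)^\top\le0$ for all $\tau\in[0,\bar T]$, $\zeta(\bar T)^\top J-\zeta(0)^\top+\varepsilon\mathbf{1}_n^\top\le0$, and the impulsive system $\dot x=Ax$ ($t\ne t_k$), $x(t_k^+)=Jx(t_k)$ is asymptotically stable under constant dwell-time $\bar T$.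
   Context: A matrix is Metzler if its off-diagonal entries are nonnegative and nonnegative if all entries are. Vector inequalities are componentwise; $\mathbf{1}_n$ is the vector of ones. In the impulsive system $x(t^+)=\lim_{s\downarrow t}x(s)$, impulse times are strictly increasing, and constant dwell-time $\bar T$ means $t_{k+1}-t_k=\bar T$ for all $k$; asymptotic stability means global asymptotic stability of the zero solution. *)

From Stdlib Require Import Reals Lra.
Open Scope R_scope.

(* Vectors in R^n: functions nat -> R (only indices < n matter).
   Matrices in R^{n x n}: functions nat -> nat -> R, entry (row i, col j) = M i j. *)

Fixpoint sumR (n : nat) (f : nat -> R) : R :=
  match n with
  | O => 0
  | S m => sumR m f + f m
  end.

Definition Metzler (n : nat) (A : nat -> nat -> R) : Prop :=
  forall i j, (i < n)%nat -> (j < n)%nat -> i <> j -> 0 <= A i j.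

Definition nonneg_mx (n : nat) (J : nat -> nat -> R) : Prop :=
  forall i j, (i < n)%nat -> (j < n)%nat -> 0 <= J i j.

Definition mxv (n : nat) (M : nat -> nat -> R) (v : nat -> R) : nat -> R :=
  fun i => sumR n (fun l => M i l * v l).
(* (M^T v)_i = (v^T M)_i *)
Definition mxTv (n : nat) (M : nat -> nat -> R) (v : nat -> R) : nat -> R :=
  fun i => sumR n (fun l => M l i * v l).

(* Polynomial vector of degree <= d with coefficients c : c k i = coefficient
   of tau^k in component i. *)
Definition polyv (d : nat) (c : nat -> nat -> R) (tau : R) : nat -> R :=
  fun i => sumR (S d) (fun k => c k i * tau ^ k).
Definition dpolyv (d : nat) (c : nat -> nat -> R) (tau : R) : nat -> R :=
  fun i => sumR (S d) (fun k => INR k * c k i * tau ^ (k - 1)).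

Definition theta_sum (d : nat) (theta : nat -> nat -> nat -> R) (T tau : R)
  : nat -> R :=
  fun l => sumR (S d) (fun i => sumR (S (d - i))
             (fun j => theta i j l * tau ^ i * (T - tau) ^ j)).

(* norm on R^n (1-norm; all norms equivalent) *)
Definition vnorm (n : nat) (v : nat -> R) : R := sumR n (fun i => Rabs (v i)).

(* x : R -> R^n is a solution on [0, oo) of
     xdot = A x  (t <> t_k),   x(t_k^+) = J x(t_k),
   with initial condition x(0) = x(0^+) = x0 and impulse times t_k = k*T, k >= 1
   (constant dwell time T).  Convention: x is left-continuous at impulse times,
   i.e. x(t_k) = x(t_k^-). *)
Definition is_imp_solution (n : nat) (A J : nat -> nat -> R) (T : R)
  (x0 : nat -> R) (x : R -> nat -> R) : Prop :=
  (forall i, (i < n)%nat -> x 0 i = x0 i) /\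
  forall k : nat,
    let a := INR k * T in
    let b := INR (S k) * T in
    (forall t, a < t < b -> forall i, (i < n)%nat ->
        derivable_pt_lim (fun s => x s i) t (mxv n A (x t) i)) /\
    (forall i, (i < n)%nat ->
        limit1_in (fun s => x s i) (fun s => a < s < b) (x b i) b) /\
    (forall i, (i < n)%nat ->
        limit1_in (fun s => x s i) (fun s => a < s < b)
          (match k with O => x a i | S _ => mxv n J (x a) i end) a).

Definition imp_GAS (n : nat) (A J : nat -> nat -> R) (T : R) : Prop :=
  (forall e, 0 < e -> exists delta, 0 < delta /\
     forall x0 x, is_imp_solution n A J T x0 x -> vnorm n x0 < delta ->
       forall t, 0 <= t -> vnorm n (x t) < e) /\
  (forall x0 x, is_imp_solution n A J T x0 x ->
     forall e, 0 < e -> exists T0, forall t, T0 <= t -> vnorm n (x t) < e).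

From Stdlib Require Import Reals Lra Lia FunctionalExtensionality Classical.
Open Scope R_scope.

(* Conditions (i) and (iii) say that [A^T zeta <= zeta'] on [0, T]: the difference is a
   polynomial with nonnegative coefficients plus nonnegative multiples of
   [tau^i (T - tau)^j].  Since [A] is Metzler, this differential inequality keeps [zeta]
   componentwise bounded below by a positive constant.  On each flow interval
   [(t_k, t_k + T)] the copositive function [V t = sum_i zeta_i (t_k + T - t) |x_i t|] is
   then nonincreasing ([|x_i|] is smoothed to [sqrt (x_i^2 + d^2)] to differentiate it),
   and condition (iv) makes [V] contract by a fixed factor [q < 1] across each impulse.
   Hence [|x t|] decays geometrically in the number of impulses. *)

Lemma sumR_ext m f g : (forall i, (i < m)%nat -> f i = g i) -> sumR m f = sumR m g.
Proof.
  induction m as [|m IH]; intros H; simpl; [reflexivity|].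
  rewrite IH, H; [reflexivity|lia|intros; apply H; lia].
Qed.

Lemma sumR_zero m : sumR m (fun _ => 0) = 0.
Proof. induction m as [|m IH]; simpl; [|rewrite IH]; lra. Qed.

Lemma sumR_le m f g : (forall i, (i < m)%nat -> f i <= g i) -> sumR m f <= sumR m g.
Proof.
  induction m as [|m IH]; intros H; simpl; [lra|].
  apply Rplus_le_compat; [apply IH; intros; apply H|apply H]; lia.
Qed.

Lemma sumR_nonneg m f : (forall i, (i < m)%nat -> 0 <= f i) -> 0 <= sumR m f.
Proof.
  induction m as [|m IH]; intros H; simpl; [lra|].
  apply Rplus_le_le_0_compat; [apply IH; intros|]; apply H; lia.
Qed.

Lemma sumR_plus m f g : sumR m (fun i => f i + g i) = sumR m f + sumR m g.
Proof. induction m as [|m IH]; simpl; [|rewrite IH]; lra. Qed.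

Lemma sumR_minus m f g : sumR m (fun i => f i - g i) = sumR m f - sumR m g.
Proof. induction m as [|m IH]; simpl; [|rewrite IH]; lra. Qed.

Lemma sumR_scal m c f : sumR m (fun i => c * f i) = c * sumR m f.
Proof. induction m as [|m IH]; simpl; [|rewrite IH]; lra. Qed.

Lemma sumR_swap m k (f : nat -> nat -> R) :
  sumR m (fun i => sumR k (fun j => f i j)) = sumR k (fun j => sumR m (fun i => f i j)).
Proof.
  induction m as [|m IH]; simpl.
  - induction k as [|k IHk]; simpl; [|rewrite <- IHk]; lra.
  - now rewrite IH, <- sumR_plus.
Qed.

Lemma sumR_term_le m f i :
  (i < m)%nat -> (forall j, (j < m)%nat -> j <> i -> 0 <= f j) -> f i <= sumR m f.
Proof.
  induction m as [|m IH]; intros Hi H; simpl; [lia|].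
  destruct (Nat.eq_dec i m) as [->|Hne].
  - assert (0 <= sumR m f) by (apply sumR_nonneg; intros; apply H; lia). lra.
  - assert (f i <= sumR m f) by (apply IH; [lia|intros; apply H; lia]).
    assert (0 <= f m) by (apply H; lia). lra.
Qed.

Lemma Rabs_sumR_le m f : Rabs (sumR m f) <= sumR m (fun i => Rabs (f i)).
Proof.
  induction m as [|m IH]; simpl; [rewrite Rabs_R0; lra|].
  eapply Rle_trans; [apply Rabs_triang|lra].
Qed.

Lemma sumR_mxv_mxTv n (A : nat -> nat -> R) w v :
  sumR n (fun i => w i * mxv n A v i) = sumR n (fun j => v j * mxTv n A w j).
Proof.
  unfold mxv, mxTv.
  replace (sumR n (fun i => w i * sumR n (fun j => A i j * v j)))
    with (sumR n (fun i => sumR n (fun j => v j * (A i j * w i))))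
    by (apply sumR_ext; intros i _; rewrite <- sumR_scal; apply sumR_ext; intros; ring).
  rewrite sumR_swap. apply sumR_ext; intros j _. now rewrite sumR_scal.
Qed.

Lemma derivable_pt_lim_congr f g x l l' :
  (forall y, f y = g y) -> l = l' -> derivable_pt_lim f x l -> derivable_pt_lim g x l'.
Proof. intros H <-. now replace g with f by (extensionality y; apply H). Qed.

Lemma derivable_pt_lim_sumR m (f : nat -> R -> R) f' x :
  (forall i, (i < m)%nat -> derivable_pt_lim (f i) x (f' i)) ->
  derivable_pt_lim (fun y => sumR m (fun i => f i y)) x (sumR m f').
Proof.
  induction m as [|m IH]; intros H; simpl.
  - apply derivable_pt_lim_const.
  - apply (derivable_pt_lim_plus (fun y => sumR m (fun i => f i y)) (f m));
      [apply IH; intros|]; apply H; lia.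
Qed.

Lemma derivable_pt_lim_polyv d c i t :
  derivable_pt_lim (fun s => polyv d c s i) t (dpolyv d c t i).
Proof.
  apply derivable_pt_lim_sumR; intros k _.
  eapply derivable_pt_lim_congr;
    [| |exact (derivable_pt_lim_scal _ (c k i) t _ (derivable_pt_lim_pow t k))];
    [reflexivity|rewrite Nat.sub_1_r; ring].
Qed.

Lemma derivable_pt_lim_reflect f b t l :
  derivable_pt_lim f (b - t) l -> derivable_pt_lim (fun s => f (b - s)) t (- l).
Proof.
  intros Hf.
  assert (Hb : derivable_pt_lim (fun s => b - s) t (-1)).
  { apply derivable_pt_lim_congr with (fun s => b - id s) (0 - 1); [reflexivity|ring|].
    apply (derivable_pt_lim_minus (fun _ => b) id); [apply derivable_pt_lim_const|apply derivable_pt_lim_id]. }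
  eapply derivable_pt_lim_congr; [| |exact (derivable_pt_lim_comp _ _ _ _ _ Hb Hf)];
    [reflexivity|ring].
Qed.

Lemma derivable_pt_lim_continuity_pt f x l : derivable_pt_lim f x l -> continuity_pt f x.
Proof. intros H. apply derivable_continuous_pt. now exists l. Qed.

Lemma theta_sum_nonneg dh theta T tau l :
  (forall i j, (i + j <= dh)%nat -> 0 <= theta i j l) -> 0 <= tau <= T ->
  0 <= theta_sum dh theta T tau l.
Proof.
  intros Htheta Htau.
  apply sumR_nonneg; intros i Hi; apply sumR_nonneg; intros j Hj.
  repeat apply Rmult_le_pos; [apply Htheta; lia|apply pow_le; lra..].
Qed.

Lemma monomial_sum_nonneg m (p : nat -> R) tau :
  (forall k, 0 <= p k) -> 0 <= tau -> 0 <= sumR m (fun k => p k * tau ^ k).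
Proof.
  intros Hp Htau. apply sumR_nonneg; intros k _.
  apply Rmult_le_pos; [apply Hp|now apply pow_le].
Qed.

Lemma certificate_flow_condition n A T dh z theta :
  (forall i j l, (i + j <= dh)%nat -> (l < n)%nat -> 0 <= theta i j l) ->
  (exists p : nat -> nat -> R,
     (forall k l, (l < n)%nat -> 0 <= p k l) /\
     forall tau l, (l < n)%nat ->
       - mxTv n A (polyv dh z tau) l + dpolyv dh z tau l - theta_sum dh theta T tau l
       = sumR (S dh) (fun k => p k l * tau ^ k)) ->
  forall tau, 0 <= tau <= T -> forall l, (l < n)%nat ->
    mxTv n A (polyv dh z tau) l - dpolyv dh z tau l <= 0.
Proof.
  intros Htheta [p [Hp Hpoly]] tau Htau l Hl.
  pose proof (theta_sum_nonneg dh theta T tau l (fun i j Hij => Htheta i j l Hij Hl) Htau).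
  pose proof (monomial_sum_nonneg (S dh) (fun k => p k l) tau (fun k => Hp k l Hl) (proj1 Htau)).
  specialize (Hpoly tau l Hl). lra.
Qed.

Lemma finite_common_radius (n : nat) (P : nat -> R -> Prop) :
  (forall i d d', P i d -> 0 < d' <= d -> P i d') ->
  (forall i, (i < n)%nat -> exists d, 0 < d /\ P i d) ->
  exists d, 0 < d /\ forall i, (i < n)%nat -> P i d.
Proof.
  intros Hmono. induction n as [|n IH]; intros H.
  - exists 1; split; [lra|intros; lia].
  - destruct IH as [d1 [Hd1 P1]]; [intros; apply H; lia|].
    destruct (H n ltac:(lia)) as [d2 [Hd2 P2]].
    assert (Hd : 0 < Rmin d1 d2) by now apply Rmin_pos.
    exists (Rmin d1 d2); split; [exact Hd|]. intros i Hi.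
    destruct (Nat.eq_dec i n) as [->|Hne].
    + apply Hmono with d2; [exact P2|split; [exact Hd|apply Rmin_r]].
    + apply Hmono with d1; [apply P1; lia|split; [exact Hd|apply Rmin_l]].
Qed.

Lemma continuity_pt_pos_nbhd f x :
  continuity_pt f x -> 0 < f x -> exists d, 0 < d /\ forall y, Rabs (y - x) < d -> 0 < f y.
Proof.
  intros Hc Hf. destruct (Hc (f x) Hf) as [d [Hd H]]. exists d; split; [exact Hd|].
  intros y Hy. destruct (Req_dec x y) as [<-|Hne]; [exact Hf|].
  specialize (H y (conj (conj I Hne) Hy)). simpl in H; unfold R_dist in H.
  apply Rabs_def2 in H. lra.
Qed.

(* Continuous induction: the set of [t] up to which [g > 0] holds is closed under
   suprema (by the hypothesis) and open to the right (by continuity). *)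
Lemma continuous_induction_lower_bound n (g : R -> nat -> R) (T m0 : R) :
  0 < m0 ->
  (forall t i, (i < n)%nat -> continuity_pt (fun s => g s i) t) ->
  (forall tau, 0 <= tau <= T ->
     (forall s, 0 <= s < tau -> forall i, (i < n)%nat -> 0 < g s i) ->
     forall i, (i < n)%nat -> m0 <= g tau i) ->
  forall tau, 0 <= tau <= T -> forall i, (i < n)%nat -> m0 <= g tau i.
Proof.
  intros Hm0 Hcont Hstep tau Htau.
  set (E := fun t => 0 <= t <= T /\ forall s, 0 <= s <= t -> forall i, (i < n)%nat -> 0 < g s i).
  assert (HE0 : E 0).
  { split; [lra|]. intros s Hs i Hi. replace s with 0 by lra.
    assert (m0 <= g 0 i) by (apply Hstep; [lra|intros; lra|exact Hi]). lra. }
  assert (HEb : bound E) by (exists T; intros t [Ht _]; lra).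
  destruct (completeness E HEb (ex_intro _ 0 HE0)) as [m [Hub Hlub]].
  assert (HmT : 0 <= m <= T) by (split; [apply Hub, HE0|apply Hlub; intros t [Ht _]; lra]).
  assert (Hbelow : forall s, 0 <= s < m -> forall i, (i < n)%nat -> 0 < g s i).
  { intros s Hs i Hi. destruct (classic (exists t, E t /\ s < t)) as [[t [[_ Ht] Hst]]|Hno].
    - apply Ht; [lra|exact Hi].
    - exfalso. assert (m <= s); [|lra].
      apply Hlub. intros t Et. apply Rnot_lt_le. intros Hlt. apply Hno. eauto. }
  assert (Hm : m = T).
  { apply Rle_antisym; [apply HmT|]. apply Rnot_lt_le. intros HmT'.
    destruct (finite_common_radius n (fun i d => forall y, Rabs (y - m) < d -> 0 < g y i))
      as [d [Hd Hnear]].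
    { intros i d d' H Hd' y Hy. apply H. lra. }
    { intros i Hi. apply continuity_pt_pos_nbhd; [apply Hcont, Hi|].
      assert (m0 <= g m i) by (apply Hstep; auto). lra. }
    assert (Ht' : E (Rmin (m + d / 2) T)).
    { split; [split; [apply Rmin_glb; lra|apply Rmin_r]|].
      intros s Hs i Hi. destruct (Rlt_le_dec s m); [apply Hbelow; auto; lra|].
      apply Hnear; [exact Hi|]. pose proof (Rmin_l (m + d / 2) T). rewrite Rabs_right; lra. }
    apply Hub in Ht'. revert Ht'. unfold Rmin. destruct Rle_dec; lra. }
  apply Hstep; [exact Htau|]. intros s Hs i Hi. apply Hbelow; [lra|exact Hi].
Qed.

Section MetzlerSupersolution.

Variables (n : nat) (A : nat -> nat -> R) (T : R) (g g' : R -> nat -> R).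
Hypothesis HA : Metzler n A.
Hypothesis Hg : forall t i, (i < n)%nat -> derivable_pt_lim (fun s => g s i) t (g' t i).
Hypothesis Hsuper : forall t, 0 <= t <= T -> forall i, (i < n)%nat -> mxTv n A (g t) i <= g' t i.

(* [exp (c t) g_i(t)] is nondecreasing as long as [g >= 0]: the off-diagonal part of
   [A^T g] is then nonnegative and the diagonal part is compensated by [c]. *)
Lemma supersolution_exp_lower_bound c :
  (forall i, (i < n)%nat -> - c <= A i i) ->
  forall tau, 0 <= tau <= T ->
  (forall s, 0 <= s < tau -> forall i, (i < n)%nat -> 0 <= g s i) ->
  forall i, (i < n)%nat -> g 0 i * exp (- (c * tau)) <= g tau i.
Proof.
  intros Hc tau Htau Hpos i Hi.
  set (u := fun s => exp (c * s) * g s i).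
  set (u' := fun s => exp (c * s) * (c * g s i + g' s i)).
  assert (Hu : forall s, derivable_pt_lim u s (u' s)).
  { intros s.
    assert (Hl : derivable_pt_lim (fun s => c * s) s c).
    { apply derivable_pt_lim_congr with (mult_real_fct c id) (c * 1); [reflexivity|ring|].
      apply derivable_pt_lim_scal, derivable_pt_lim_id. }
    assert (He := derivable_pt_lim_comp _ _ _ _ _ Hl (derivable_pt_lim_exp (c * s))).
    eapply derivable_pt_lim_congr; [| |exact (derivable_pt_lim_mult _ _ _ _ _ He (Hg s i Hi))];
      [reflexivity|unfold u', comp; ring]. }
  assert (Hmono : u 0 <= u tau).
  { destruct (Req_dec tau 0) as [->|Hne]; [lra|].
    destruct (MVT_cor2 u u' 0 tau ltac:(lra) (fun s _ => Hu s)) as [s [Heq Hs]].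
    assert (0 <= u' s); [|nra].
    apply Rmult_le_pos; [apply Rlt_le, exp_pos|].
    assert (Hdiag : A i i * g s i <= mxTv n A (g s) i).
    { apply (sumR_term_le n (fun l => A l i * g s l)); [exact Hi|].
      intros j Hj Hji. apply Rmult_le_pos; [apply HA; auto|apply Hpos; auto; lra]. }
    assert (mxTv n A (g s) i <= g' s i) by (apply Hsuper; auto; lra).
    assert (0 <= g s i) by (apply Hpos; auto; lra).
    specialize (Hc i Hi). nra. }
  unfold u in Hmono. rewrite Rmult_0_r, exp_0, Rmult_1_l in Hmono.
  replace (g tau i) with (exp (- (c * tau)) * (exp (c * tau) * g tau i))
    by (rewrite <- Rmult_assoc, <- exp_plus, Rplus_opp_l, exp_0; ring).
  rewrite Rmult_comm. apply Rmult_le_compat_l; [apply Rlt_le, exp_pos|exact Hmono].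
Qed.

Lemma supersolution_uniformly_pos eps :
  0 < eps -> (forall i, (i < n)%nat -> eps <= g 0 i) ->
  exists m0, 0 < m0 /\ forall tau, 0 <= tau <= T -> forall i, (i < n)%nat -> m0 <= g tau i.
Proof.
  intros Heps Hg0.
  set (c := sumR n (fun i => Rabs (A i i))).
  assert (Hc0 : 0 <= c) by (apply sumR_nonneg; intros; apply Rabs_pos).
  assert (Hc : forall i, (i < n)%nat -> - c <= A i i).
  { intros i Hi.
    assert (Rabs (A i i) <= c)
      by (apply (sumR_term_le n (fun i => Rabs (A i i))); [exact Hi|intros; apply Rabs_pos]).
    pose proof (Rle_abs (- A i i)). rewrite Rabs_Ropp in *. lra. }
  exists (eps * exp (- (c * T))). split; [apply Rmult_lt_0_compat; [lra|apply exp_pos]|].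
  apply continuous_induction_lower_bound; [apply Rmult_lt_0_compat; [lra|apply exp_pos]| |].
  { intros t i Hi. eapply derivable_pt_lim_continuity_pt, Hg, Hi. }
  intros tau Htau Hpos i Hi.
  eapply Rle_trans;
    [|apply (supersolution_exp_lower_bound c Hc tau Htau); [intros; apply Rlt_le, Hpos; auto|exact Hi]].
  apply Rmult_le_compat; [lra|apply Rlt_le, exp_pos|apply Hg0, Hi|].
  destruct (Req_dec (c * T) (c * tau)) as [->|Hne]; [lra|].
  apply Rlt_le, exp_increasing.
  assert (c * tau <= c * T) by (apply Rmult_le_compat_l; lra). lra.
Qed.

End MetzlerSupersolution.

Lemma limit1_in_le_of_frequently f D l x0 c :
  limit1_in f D l x0 ->
  (forall delta, 0 < delta -> exists s, D s /\ R_dist s x0 < delta /\ f s <= c) -> l <= c.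
Proof.
  intros Hl Hfreq. apply Rnot_lt_le. intros Hlt.
  destruct (Hl (l - c) ltac:(lra)) as [delta [Hdelta Hnear]].
  destruct (Hfreq delta Hdelta) as [s [Hs [Hds Hfs]]].
  specialize (Hnear s (conj Hs Hds)). simpl in Hnear; unfold R_dist in Hnear.
  apply Rabs_def2 in Hnear. lra.
Qed.

Lemma limit1_in_ge_of_frequently f D l x0 c :
  limit1_in f D l x0 ->
  (forall delta, 0 < delta -> exists s, D s /\ R_dist s x0 < delta /\ c <= f s) -> c <= l.
Proof.
  intros Hl Hfreq. apply Ropp_le_cancel.
  apply (limit1_in_le_of_frequently (fun s => - f s) D (- l) x0 (- c)); [now apply limit_Ropp|].
  intros delta Hdelta. destruct (Hfreq delta Hdelta) as [s [Hs [Hds Hfs]]].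
  exists s. repeat split; [exact Hs|exact Hds|lra].
Qed.

Lemma points_near_left a t delta :
  a < t -> 0 < delta -> exists s, a < s < t /\ R_dist s a < delta.
Proof.
  intros Hat Hdelta. pose proof (Rmin_l delta (t - a)). pose proof (Rmin_r delta (t - a)).
  assert (0 < Rmin delta (t - a)) by (apply Rmin_pos; lra).
  exists (a + Rmin delta (t - a) / 2). unfold R_dist. rewrite Rabs_right; lra.
Qed.

Lemma points_near_right t b delta :
  t < b -> 0 < delta -> exists s, t < s < b /\ R_dist s b < delta.
Proof.
  intros Htb Hdelta. pose proof (Rmin_l delta (b - t)). pose proof (Rmin_r delta (b - t)).
  assert (0 < Rmin delta (b - t)) by (apply Rmin_pos; lra).
  exists (b - Rmin delta (b - t) / 2). unfold R_dist. rewrite Rabs_left; lra.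
Qed.

Lemma nonincreasing_limits_le f a b la lb :
  a < b -> (forall s t, a < s -> s <= t -> t < b -> f t <= f s) ->
  limit1_in f (fun s => a < s < b) la a -> limit1_in f (fun s => a < s < b) lb b ->
  (forall t, a < t < b -> f t <= la) /\ lb <= la.
Proof.
  intros Hab Hmono Hla Hlb.
  assert (Hleft : forall t, a < t < b -> f t <= la).
  { intros t Ht. apply (limit1_in_ge_of_frequently _ _ _ _ _ Hla).
    intros delta Hdelta. destruct (points_near_left a t delta) as [s [Hs Hds]]; [lra|exact Hdelta|].
    exists s. repeat split; [lra|lra|exact Hds|apply Hmono; lra]. }
  split; [exact Hleft|].
  apply (limit1_in_le_of_frequently _ _ _ _ _ Hlb).
  intros delta Hdelta. destruct (points_near_right a b delta) as [s [Hs Hds]]; [lra|exact Hdelta|].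
  exists s. repeat split; [lra|lra|exact Hds|apply Hleft; lra].
Qed.

Lemma limit1_in_sumR m (f : nat -> R -> R) l D x0 :
  (forall i, (i < m)%nat -> limit1_in (f i) D (l i) x0) ->
  limit1_in (fun s => sumR m (fun i => f i s)) D (sumR m l) x0.
Proof.
  induction m as [|m IH]; intros H; simpl.
  - intros e He. exists 1. split; [lra|]. intros. simpl. unfold R_dist. rewrite Rminus_diag, Rabs_R0; lra.
  - apply limit_plus; [apply IH; intros|]; apply H; lia.
Qed.

Lemma limit1_in_Rabs f D l x0 :
  limit1_in f D l x0 -> limit1_in (fun s => Rabs (f s)) D (Rabs l) x0.
Proof.
  intros H e He. destruct (H e He) as [delta [Hdelta Hf]]. exists delta; split; [exact Hdelta|].
  intros y Hy. specialize (Hf y Hy). simpl in *. unfold R_dist in *.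
  eapply Rle_lt_trans; [apply Rabs_triang_inv2|exact Hf].
Qed.

Lemma limit1_in_continuity_pt f D x0 :
  continuity_pt f x0 -> limit1_in f D (f x0) x0.
Proof.
  intros Hc e He. destruct (Hc e He) as [delta [Hdelta Hf]]. exists delta; split; [exact Hdelta|].
  intros y [Dy Hy]. destruct (Req_dec x0 y) as [<-|Hne].
  - simpl. unfold R_dist. rewrite Rminus_diag, Rabs_R0. exact He.
  - apply Hf. repeat split; auto.
Qed.

Definition smooth_abs (d x : R) : R := sqrt (x * x + d * d).

Lemma smooth_abs_sq d x : smooth_abs d x * smooth_abs d x = x * x + d * d.
Proof. apply sqrt_sqrt. nra. Qed.

Lemma smooth_abs_bounds d x :
  0 < d -> Rabs x <= smooth_abs d x /\ d <= smooth_abs d x /\ smooth_abs d x <= Rabs x + d.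
Proof.
  intros Hd. pose proof (smooth_abs_sq d x) as Hsq. pose proof (sqrt_pos (x * x + d * d)).
  fold (smooth_abs d x) in *. pose proof (Rabs_pos x).
  assert (Hx : Rabs x * Rabs x = x * x) by (rewrite <- Rabs_mult; apply Rabs_pos_eq; nra).
  split; [|split]; nra.
Qed.

Lemma derivable_pt_lim_smooth_abs d f t l :
  0 < d -> derivable_pt_lim f t l ->
  derivable_pt_lim (fun s => smooth_abs d (f s)) t (f t * l / smooth_abs d (f t)).
Proof.
  intros Hd Hf.
  assert (Hq : derivable_pt_lim (fun s => f s * f s + d * d) t (l * f t + f t * l + 0)).
  { apply (derivable_pt_lim_plus (fun s => f s * f s) (fun _ => d * d)).
    - now apply derivable_pt_lim_mult.
    - apply derivable_pt_lim_const. }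
  assert (Hpos : 0 < f t * f t + d * d) by nra.
  eapply derivable_pt_lim_congr;
    [| |exact (derivable_pt_lim_comp _ _ _ _ _ Hq (derivable_pt_lim_sqrt _ Hpos))];
    [reflexivity|].
  fold (smooth_abs d (f t)). pose proof (proj1 (proj2 (smooth_abs_bounds d (f t) Hd))).
  field. lra.
Qed.

(* The diagonal case [xi = xj] uses [x^2 / S = S - d^2 / S]; off the diagonal the
   Metzler sign [0 <= a] allows [xj xi / S_i <= |xj| <= S_j]. *)
Lemma smooth_abs_cross_le a xi xj d :
  0 < d -> (xi = xj \/ 0 <= a) ->
  a * xj * xi / smooth_abs d xi <= a * smooth_abs d xj + Rabs a * d.
Proof.
  intros Hd Hcase.
  destruct (smooth_abs_bounds d xi Hd) as [Hxi [Hdi Hui]].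
  destruct (smooth_abs_bounds d xj Hd) as [Hxj [Hdj Huj]].
  pose proof (smooth_abs_sq d xi) as Hsqi.
  set (Si := smooth_abs d xi) in *. set (Sj := smooth_abs d xj) in *.
  assert (HSi : 0 < Si) by lra.
  destruct Hcase as [<-|Ha].
  - replace (a * xi * xi / Si) with (a * Si - a * d * (d / Si)).
    2: { replace (a * xi * xi) with (a * (Si * Si) - a * (d * d)) by (rewrite Hsqi; ring).
         field. lra. }
    assert (Hr : 0 < d / Si <= 1).
    { split; [apply Rdiv_lt_0_compat; lra|].
      apply (Rmult_le_reg_r Si); [lra|]. field_simplify; lra. }
    replace Sj with Si by reflexivity.
    assert (- (a * d * (d / Si)) <= Rabs a * d); [|lra].
    set (r := d / Si) in *. pose proof (Rle_abs (- a)) as Ha. rewrite Rabs_Ropp in Ha.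
    assert (0 <= (Rabs a + a) * (d * r)) by (apply Rmult_le_pos; nra).
    assert (0 <= Rabs a * d * (1 - r)) by (pose proof (Rabs_pos a); apply Rmult_le_pos; nra).
    nra.
  - assert (Hprod : xj * xi <= Rabs xj * Rabs xi) by (rewrite <- Rabs_mult; apply Rle_abs).
    assert (Hq : xj * xi / Si <= Sj).
    { apply (Rmult_le_reg_r Si); [lra|]. field_simplify; [|lra].
      pose proof (Rabs_pos xj). pose proof (Rabs_pos xi). nra. }
    rewrite Rabs_pos_eq by lra. unfold Rdiv in *.
    assert (a * (xj * xi * / Si) <= a * Sj) by (apply Rmult_le_compat_l; lra). nra.
Qed.

Definition wnorm (n : nat) (w v : nat -> R) : R := sumR n (fun i => w i * Rabs (v i)).

Lemma Rle_of_forall_scaled_slack a b C : (forall d, 0 < d -> a <= b + d * C) -> a <= b.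
Proof.
  intros H. apply Rle_plus_epsilon. intros e He.
  set (d := e / (Rabs C + 1)).
  assert (HC : 0 < Rabs C + 1) by (pose proof (Rabs_pos C); lra).
  assert (Hd : 0 < d) by (apply Rdiv_lt_0_compat; lra).
  specialize (H d Hd).
  assert (d * C <= d * Rabs C) by (apply Rmult_le_compat_l; [lra|apply Rle_abs]).
  assert (d * (Rabs C + 1) = e) by (unfold d; field; lra). nra.
Qed.

Section CopositiveLyapunov.

Variables (n : nat) (A : nat -> nat -> R) (a b : R) (x w w' : R -> nat -> R).
Hypothesis HA : Metzler n A.
Hypothesis Hx : forall t, a < t < b -> forall i, (i < n)%nat ->
  derivable_pt_lim (fun s => x s i) t (mxv n A (x t) i).
Hypothesis Hw : forall t, a < t < b -> forall i, (i < n)%nat ->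
  derivable_pt_lim (fun s => w s i) t (w' t i).
Hypothesis Hw0 : forall t, a < t < b -> forall i, (i < n)%nat -> 0 <= w t i.
Hypothesis Hwdec : forall t, a < t < b -> forall i, (i < n)%nat ->
  w' t i + mxTv n A (w t) i <= 0.

Let rowsum i := sumR n (fun j => Rabs (A i j)).

Let smoothed_wnorm d s := sumR n (fun i => w s i * smooth_abs d (x s i)).
Let smoothed_wnorm' d s := sumR n (fun i =>
  w' s i * smooth_abs d (x s i) + w s i * (x s i * mxv n A (x s) i / smooth_abs d (x s i))).

Lemma derivable_pt_lim_smoothed_wnorm d t :
  0 < d -> a < t < b -> derivable_pt_lim (smoothed_wnorm d) t (smoothed_wnorm' d t).
Proof.
  intros Hd Ht. apply derivable_pt_lim_sumR. intros i Hi.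
  apply (derivable_pt_lim_mult (fun s => w s i) (fun s => smooth_abs d (x s i))).
  - now apply Hw.
  - now apply derivable_pt_lim_smooth_abs, Hx.
Qed.

Lemma smoothed_wnorm_derivative_le d t :
  0 < d -> a < t < b -> smoothed_wnorm' d t <= d * sumR n (fun i => w t i * rowsum i).
Proof.
  intros Hd Ht.
  set (S := fun i => smooth_abs d (x t i)).
  set (Ax := mxv n A (x t)).
  assert (Hterm : forall i, (i < n)%nat -> x t i * Ax i / S i <= mxv n A S i + d * rowsum i).
  { intros i Hi.
    replace (x t i * Ax i / S i) with (sumR n (fun j => A i j * x t j * x t i / S i)).
    2: { replace (x t i * Ax i / S i) with (x t i / S i * Ax i) by (unfold Rdiv; ring).
         unfold Ax, mxv. rewrite <- sumR_scal. apply sumR_ext; intros; unfold Rdiv; ring. }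
    apply Rle_trans with (sumR n (fun j => A i j * S j + Rabs (A i j) * d)).
    - apply sumR_le. intros j Hj. apply smooth_abs_cross_le; [exact Hd|].
      destruct (Nat.eq_dec i j) as [->|Hij]; [now left|right; apply HA; auto].
    - rewrite sumR_plus. unfold rowsum. rewrite <- sumR_scal.
      apply Req_le, f_equal, sumR_ext; intros; ring. }
  apply Rle_trans with
    (sumR n (fun i => w' t i * S i + w t i * mxv n A S i + d * (w t i * rowsum i))).
  - apply sumR_le. intros i Hi.
    change (w' t i * S i + w t i * (x t i * Ax i / S i) <=
            w' t i * S i + w t i * mxv n A S i + d * (w t i * rowsum i)).
    pose proof (Rmult_le_compat_l _ _ _ (Hw0 t Ht i Hi) (Hterm i Hi)). lra.
  - rewrite !sumR_plus, sumR_mxv_mxTv, sumR_scal, <- sumR_plus.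
    assert (sumR n (fun j => w' t j * S j + S j * mxTv n A (w t) j) <= 0); [|lra].
    rewrite <- (sumR_zero n). apply sumR_le. intros j Hj.
    pose proof (proj1 (proj2 (smooth_abs_bounds d (x t j) Hd))).
    pose proof (Hwdec t Ht j Hj). fold (S j) in *. nra.
Qed.

Lemma wnorm_nonincreasing s t :
  a < s -> s <= t -> t < b -> wnorm n (w t) (x t) <= wnorm n (w s) (x s).
Proof.
  intros Has Hst Htb. destruct (Req_dec s t) as [<-|Hne]; [lra|].
  set (K := fun c => sumR n (fun i => w c i * rowsum i)).
  destruct (continuity_ab_maj K s t Hst) as [c0 [HKmax Hc0]].
  { intros c Hc. eapply derivable_pt_lim_continuity_pt, derivable_pt_lim_sumR.
    intros i Hi. apply (derivable_pt_lim_mult (fun c => w c i) (fun _ => rowsum i)).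
    - apply Hw; [lra|exact Hi].
    - apply derivable_pt_lim_const. }
  apply Rle_of_forall_scaled_slack with (K c0 * (t - s) + sumR n (w s)).
  intros d Hd.
  destruct (MVT_cor2 (smoothed_wnorm d) (smoothed_wnorm' d) s t)
    as [c [Heq Hc]]; [lra|intros c Hc; apply derivable_pt_lim_smoothed_wnorm; auto; lra|].
  assert (Hslope : smoothed_wnorm' d c * (t - s) <= d * K c0 * (t - s)).
  { apply Rmult_le_compat_r; [lra|].
    eapply Rle_trans; [apply smoothed_wnorm_derivative_le; auto; lra|].
    apply Rmult_le_compat_l; [lra|apply HKmax; lra]. }
  assert (Hlow : wnorm n (w t) (x t) <= smoothed_wnorm d t).
  { apply sumR_le. intros i Hi. apply Rmult_le_compat_l; [apply Hw0; auto; lra|].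
    apply smooth_abs_bounds, Hd. }
  assert (Hup : smoothed_wnorm d s <= wnorm n (w s) (x s) + d * sumR n (w s)).
  { unfold wnorm. rewrite <- sumR_scal, <- sumR_plus. apply sumR_le. intros i Hi.
    pose proof (proj2 (proj2 (smooth_abs_bounds d (x s i) Hd))).
    pose proof (Hw0 s ltac:(lra) i Hi). nra. }
  lra.
Qed.

End CopositiveLyapunov.

Lemma vnorm_nonneg n v : 0 <= vnorm n v.
Proof. apply sumR_nonneg; intros; apply Rabs_pos. Qed.

Lemma wnorm_le_vnorm n w v M : (forall i, (i < n)%nat -> w i <= M) -> wnorm n w v <= M * vnorm n v.
Proof.
  intros Hw. unfold wnorm, vnorm. rewrite <- sumR_scal. apply sumR_le. intros i Hi.
  apply Rmult_le_compat_r; [apply Rabs_pos|now apply Hw].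
Qed.

Lemma vnorm_le_wnorm n w v m : (forall i, (i < n)%nat -> m <= w i) -> m * vnorm n v <= wnorm n w v.
Proof.
  intros Hw. unfold wnorm, vnorm. rewrite <- sumR_scal. apply sumR_le. intros i Hi.
  apply Rmult_le_compat_r; [apply Rabs_pos|now apply Hw].
Qed.

Lemma wnorm_mxv_le n J w v :
  nonneg_mx n J -> (forall i, (i < n)%nat -> 0 <= w i) ->
  wnorm n w (mxv n J v) <= wnorm n (mxTv n J w) v.
Proof.
  intros HJ Hw. unfold wnorm.
  apply Rle_trans with (sumR n (fun i => w i * mxv n J (fun l => Rabs (v l)) i)).
  - apply sumR_le. intros i Hi. apply Rmult_le_compat_l; [now apply Hw|].
    eapply Rle_trans; [apply Rabs_sumR_le|]. apply Req_le, sumR_ext. intros l Hl.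
    rewrite Rabs_mult, (Rabs_pos_eq (J i l)) by (apply HJ; auto). reflexivity.
  - rewrite sumR_mxv_mxTv. apply Req_le, sumR_ext. intros; ring.
Qed.

Lemma exists_dwell_index T t : 0 < T -> 0 < t -> exists k, INR k * T < t <= INR (S k) * T.
Proof.
  intros HT Ht. destruct (INR_archimed T t HT) as [N HN].
  assert (H : forall M, t <= INR M * T -> exists k, INR k * T < t <= INR (S k) * T).
  { induction M as [|M IH]; intros HtM; [simpl in HtM; lra|].
    destruct (Rle_lt_dec t (INR M * T)) as [Hle|Hlt]; [now apply IH|].
    now exists M. }
  apply (H N). lra.
Qed.

Section GeometricDecay.

Variables (n : nat) (A J : nat -> nat -> R) (T C q : R).
Hypotheses (HT : 0 < T) (HC : 0 <= C) (Hq : 0 <= q < 1).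
Hypothesis Hdecay : forall x0 x, is_imp_solution n A J T x0 x ->
  vnorm n (x 0) = vnorm n x0 /\
  forall t k, INR k * T < t <= INR (S k) * T -> vnorm n (x t) <= C * q ^ k * vnorm n x0.

Lemma decay_uniform_bound x0 x t :
  is_imp_solution n A J T x0 x -> 0 <= t -> vnorm n (x t) <= (C + 1) * vnorm n x0.
Proof.
  intros Hsol Ht. destruct (Hdecay x0 x Hsol) as [H0 Hk]. pose proof (vnorm_nonneg n x0).
  destruct (Req_dec t 0) as [->|Hne]; [rewrite H0; nra|].
  destruct (exists_dwell_index T t HT ltac:(lra)) as [k Hkt].
  assert (Hqk : q ^ k <= 1) by (rewrite <- (pow1 k); apply pow_incr; lra).
  pose proof (pow_le q k (proj1 Hq)).
  eapply Rle_trans; [apply Hk, Hkt|]. apply Rmult_le_compat_r; [lra|nra].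
Qed.

Lemma imp_GAS_of_geometric_decay : imp_GAS n A J T.
Proof.
  split.
  - intros e He. exists (e / (C + 1)). split; [apply Rdiv_lt_0_compat; lra|].
    intros x0 x Hsol Hx0 t Ht.
    eapply Rle_lt_trans; [exact (decay_uniform_bound x0 x t Hsol Ht)|].
    apply (Rmult_lt_compat_l (C + 1)) in Hx0; [|lra].
    replace ((C + 1) * (e / (C + 1))) with e in Hx0 by (field; lra). exact Hx0.
  - intros x0 x Hsol e He. destruct (Hdecay x0 x Hsol) as [_ Hk].
    set (B := (C + 1) * (vnorm n x0 + 1)).
    assert (HB : 0 < B) by (pose proof (vnorm_nonneg n x0); unfold B; nra).
    destruct (pow_lt_1_zero q ltac:(rewrite Rabs_right; lra) (e / B)
      ltac:(apply Rdiv_lt_0_compat; lra)) as [N HN].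
    exists (INR (S N) * T). intros t Ht.
    assert (Ht0 : 0 < t) by (rewrite S_INR in Ht; pose proof (pos_INR N); nra).
    destruct (exists_dwell_index T t HT Ht0) as [k Hkt].
    assert (HkN : (N <= k)%nat).
    { apply INR_le, (Rmult_le_reg_r T); [exact HT|].
      rewrite !S_INR, !Rmult_plus_distr_r in *. lra. }
    specialize (HN k HkN). rewrite Rabs_right in HN by (apply Rle_ge, pow_le; lra).
    eapply Rle_lt_trans; [apply Hk, Hkt|].
    apply (Rmult_lt_compat_l B) in HN; [|exact HB].
    replace (B * (e / B)) with e in HN by (field; lra).
    pose proof (vnorm_nonneg n x0). pose proof (pow_le q k (proj1 Hq)).
    unfold B in HN. nra.
Qed.

End GeometricDecay.

Section DwellTimeLyapunov.

Variables (n : nat) (A J : nat -> nat -> R) (T veps m0 : R) (zeta zeta' : R -> nat -> R).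
Hypotheses (HA : Metzler n A) (HJ : nonneg_mx n J) (HT : 0 < T) (Hveps : 0 < veps) (Hm0 : 0 < m0).
Hypothesis Hzeta : forall t i, (i < n)%nat -> derivable_pt_lim (fun s => zeta s i) t (zeta' t i).
Hypothesis Hpos : forall tau, 0 <= tau <= T -> forall i, (i < n)%nat -> m0 <= zeta tau i.
Hypothesis Hflow : forall tau, 0 <= tau <= T -> forall i, (i < n)%nat ->
  mxTv n A (zeta tau) i <= zeta' tau i.
Hypothesis Hjump : forall i, (i < n)%nat -> mxTv n J (zeta T) i <= zeta 0 i - veps.

Lemma flow_interval_estimate a b (x : R -> nat -> R) (y : nat -> R) :
  b - a = T ->
  (forall t, a < t < b -> forall i, (i < n)%nat ->
     derivable_pt_lim (fun s => x s i) t (mxv n A (x t) i)) ->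
  (forall i, (i < n)%nat -> limit1_in (fun s => x s i) (fun s => a < s < b) (x b i) b) ->
  (forall i, (i < n)%nat -> limit1_in (fun s => x s i) (fun s => a < s < b) (y i) a) ->
  (forall t, a < t < b -> wnorm n (zeta (b - t)) (x t) <= wnorm n (zeta T) y) /\
  wnorm n (zeta 0) (x b) <= wnorm n (zeta T) y.
Proof.
  intros Hba Hx Hxb Hya.
  set (V := fun t => wnorm n (zeta (b - t)) (x t)).
  assert (Hlim : forall s0 c, (forall i, (i < n)%nat ->
              limit1_in (fun s => x s i) (fun s => a < s < b) (c i) s0) ->
            limit1_in V (fun s => a < s < b) (wnorm n (zeta (b - s0)) c) s0).
  { intros s0 c Hc. apply (limit1_in_sumR n (fun i s => zeta (b - s) i * Rabs (x s i))).
    intros i Hi. apply limit_mul; [|now apply limit1_in_Rabs, Hc].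
    apply (limit1_in_continuity_pt (fun s => zeta (b - s) i)).
    exact (derivable_pt_lim_continuity_pt _ _ _
      (derivable_pt_lim_reflect (fun u => zeta u i) b s0 _ (Hzeta _ i Hi))). }
  replace (zeta T) with (zeta (b - a)) by now rewrite Hba.
  replace (zeta 0) with (zeta (b - b)) by now rewrite Rminus_diag.
  apply nonincreasing_limits_le; [lra| |now apply Hlim|now apply Hlim].
  intros s t Has Hst Htb.
  apply (wnorm_nonincreasing n A a b x (fun t => zeta (b - t)) (fun t i => - zeta' (b - t) i));
    auto; intros u Hu i Hi.
  - exact (derivable_pt_lim_reflect (fun u => zeta u i) b u _ (Hzeta _ i Hi)).
  - apply Rlt_le, Rlt_le_trans with m0; [exact Hm0|apply Hpos; auto; lra].
  - assert (mxTv n A (zeta (b - u)) i <= zeta' (b - u) i) by (apply Hflow; auto; lra). lra.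
Qed.

Let M0 := sumR n (zeta 0) + veps.
Let q := 1 - veps / M0.

Lemma zeta_nonneg tau i : 0 <= tau <= T -> (i < n)%nat -> 0 <= zeta tau i.
Proof. intros Htau Hi. apply Rlt_le, Rlt_le_trans with m0; [exact Hm0|now apply Hpos]. Qed.

Lemma zeta_le_sum tau i : 0 <= tau <= T -> (i < n)%nat -> zeta tau i <= sumR n (zeta tau).
Proof. intros Htau Hi. apply sumR_term_le; [exact Hi|intros; now apply zeta_nonneg]. Qed.

Lemma contraction_factor_range : 0 <= q < 1.
Proof.
  assert (0 <= sumR n (zeta 0)) by (apply sumR_nonneg; intros; apply zeta_nonneg; auto; lra).
  assert (0 < veps / M0) by (apply Rdiv_lt_0_compat; unfold M0; lra).
  assert (veps / M0 <= 1).
  { apply (Rmult_le_reg_r M0); [unfold M0; lra|]. unfold Rdiv.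
    rewrite Rmult_assoc, Rinv_l by (unfold M0; lra). unfold M0; lra. }
  unfold q; lra.
Qed.

(* The margin [veps] of the jump condition is a fixed fraction [veps / M0] of the weight [zeta 0]. *)
Lemma jump_contraction v : wnorm n (zeta T) (mxv n J v) <= q * wnorm n (zeta 0) v.
Proof.
  assert (HM0 : 0 < M0).
  { unfold M0. pose proof (sumR_nonneg n (zeta 0) ltac:(intros; apply zeta_nonneg; auto; lra)). lra. }
  eapply Rle_trans; [apply wnorm_mxv_le; [exact HJ|intros; apply zeta_nonneg; auto; lra]|].
  apply Rle_trans with (wnorm n (zeta 0) v - veps * vnorm n v).
  - unfold wnorm, vnorm. rewrite <- sumR_scal, <- sumR_minus.
    apply sumR_le. intros i Hi. pose proof (Hjump i Hi). pose proof (Rabs_pos (v i)). nra.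
  - assert (Hw : wnorm n (zeta 0) v <= M0 * vnorm n v).
    { apply wnorm_le_vnorm. intros i Hi. pose proof (zeta_le_sum 0 i ltac:(lra) Hi). unfold M0; lra. }
    assert (veps / M0 * wnorm n (zeta 0) v <= veps * vnorm n v).
    { apply (Rmult_le_reg_l M0); [exact HM0|].
      replace (M0 * (veps / M0 * wnorm n (zeta 0) v)) with (veps * wnorm n (zeta 0) v) by (field; lra).
      rewrite <- Rmult_assoc, (Rmult_comm M0), Rmult_assoc. apply Rmult_le_compat_l; lra. }
    unfold q. lra.
Qed.

Let impulse_state (x0 : nat -> R) (x : R -> nat -> R) (k : nat) : nat -> R :=
  match k with O => x0 | S _ => mxv n J (x (INR k * T)) end.

Lemma dwell_interval_bound x0 x k : is_imp_solution n A J T x0 x ->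
  (forall t, INR k * T < t <= INR (S k) * T ->
     m0 * vnorm n (x t) <= wnorm n (zeta T) (impulse_state x0 x k)) /\
  wnorm n (zeta T) (impulse_state x0 x (S k)) <= q * wnorm n (zeta T) (impulse_state x0 x k).
Proof.
  intros [Hx0 Hsol]. destruct (Hsol k) as [Hder [Hright Hleft]].
  assert (Hb : INR (S k) * T - INR k * T = T) by (rewrite S_INR; ring).
  destruct (flow_interval_estimate (INR k * T) (INR (S k) * T) x (impulse_state x0 x k) Hb Hder Hright)
    as [Hinside Hend].
  { intros i Hi. specialize (Hleft i Hi). destruct k as [|k]; [|exact Hleft].
    replace (x (INR 0 * T) i) with (x0 i) in Hleft; [exact Hleft|].
    simpl. rewrite Rmult_0_l. symmetry. now apply Hx0. }
  split.
  - intros t Ht. destruct (Req_dec t (INR (S k) * T)) as [->|Hne].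
    + eapply Rle_trans; [|exact Hend]. apply vnorm_le_wnorm. intros; apply Hpos; auto; lra.
    + eapply Rle_trans; [|apply (Hinside t); lra]. apply vnorm_le_wnorm.
      intros; apply Hpos; auto; lra.
  - eapply Rle_trans; [apply jump_contraction|].
    apply Rmult_le_compat_l; [apply contraction_factor_range|exact Hend].
Qed.

Lemma solution_geometric_decay x0 x : is_imp_solution n A J T x0 x ->
  vnorm n (x 0) = vnorm n x0 /\
  forall t k, INR k * T < t <= INR (S k) * T ->
    vnorm n (x t) <= sumR n (zeta T) / m0 * q ^ k * vnorm n x0.
Proof.
  intros Hsol. split.
  { apply sumR_ext. intros i Hi. now rewrite (proj1 Hsol i Hi). }
  intros t k Ht.
  assert (Hdecay : forall j, wnorm n (zeta T) (impulse_state x0 x j)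
                             <= q ^ j * (sumR n (zeta T) * vnorm n x0)).
  { induction j as [|j IH].
    - rewrite pow_O, Rmult_1_l. apply wnorm_le_vnorm. intros; apply zeta_le_sum; auto; lra.
    - eapply Rle_trans; [apply (dwell_interval_bound x0 x j Hsol)|].
      simpl. rewrite Rmult_assoc.
      apply Rmult_le_compat_l; [apply contraction_factor_range|exact IH]. }
  pose proof (Rle_trans _ _ _ (proj1 (dwell_interval_bound x0 x k Hsol) t Ht) (Hdecay k)).
  apply (Rmult_le_reg_l m0); [exact Hm0|].
  replace (m0 * (sumR n (zeta T) / m0 * q ^ k * vnorm n x0))
    with (q ^ k * (sumR n (zeta T) * vnorm n x0)) by (field; lra).
  assumption.
Qed.

Lemma dwell_time_GAS : imp_GAS n A J T.
Proof.
  apply (imp_GAS_of_geometric_decay n A J T (sumR n (zeta T) / m0) q HT).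
  - apply Rmult_le_pos; [apply sumR_nonneg; intros; apply zeta_nonneg; auto; lra|].
    apply Rlt_le, Rinv_0_lt_compat, Hm0.
  - exact contraction_factor_range.
  - exact solution_geometric_decay.
Qed.

End DwellTimeLyapunov.

Theorem proposition7 (n : nat) (A J : nat -> nat -> R) (T : R) (dh : nat)
  (veps eps : R)
  (HA : Metzler n A) (HJ : nonneg_mx n J) (HT : 0 < T)
  (Hveps : 0 < veps) (Heps : 0 < eps)
  (z : nat -> nat -> R) (theta : nat -> nat -> nat -> R)
  (* (i) *)
  (H1 : forall i j l, (i + j <= dh)%nat -> (l < n)%nat -> 0 <= theta i j l)
  (* (ii) *)
  (H2 : forall l, (l < n)%nat -> 0 <= polyv dh z 0 l - eps)
  (* (iii): the polynomial vector has nonnegative monomial coefficients *)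
  (H3 : exists p : nat -> nat -> R,
        (forall k l, (l < n)%nat -> 0 <= p k l) /\
        forall tau l, (l < n)%nat ->
          - mxTv n A (polyv dh z tau) l + dpolyv dh z tau l
            - theta_sum dh theta T tau l
          = sumR (S dh) (fun k => p k l * tau ^ k))
  (* (iv) *)
  (H4 : forall l, (l < n)%nat ->
        0 <= - mxTv n J (polyv dh z T) l + polyv dh z 0 l - veps) :
  (forall tau, 0 <= tau <= T -> forall l, (l < n)%nat ->
     mxTv n A (polyv dh z tau) l - dpolyv dh z tau l <= 0) /\
  (forall l, (l < n)%nat ->
     mxTv n J (polyv dh z T) l - polyv dh z 0 l + veps <= 0) /\
  imp_GAS n A J T.
Proof.
  pose proof (certificate_flow_condition n A T dh z theta H1 H3) as Hflow.
  assert (Hjump : forall l, (l < n)%nat -> mxTv n J (polyv dh z T) l - polyv dh z 0 l + veps <= 0)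
    by (intros l Hl; specialize (H4 l Hl); lra).
  split; [exact Hflow|split; [exact Hjump|]].
  assert (Hsuper : forall tau, 0 <= tau <= T -> forall l, (l < n)%nat ->
            mxTv n A (polyv dh z tau) l <= dpolyv dh z tau l)
    by (intros tau Htau l Hl; specialize (Hflow tau Htau l Hl); lra).
  destruct (supersolution_uniformly_pos n A T (polyv dh z) (dpolyv dh z) HA
              (fun t i _ => derivable_pt_lim_polyv dh z i t) Hsuper eps Heps)
    as [m0 [Hm0 Hpos]]; [intros l Hl; specialize (H2 l Hl); lra|].
  apply (dwell_time_GAS n A J T veps m0 (polyv dh z) (dpolyv dh z) HA HJ HT Hveps Hm0
           (fun t i _ => derivable_pt_lim_polyv dh z i t) Hpos Hsuper).
  intros l Hl. specialize (Hjump l Hl). lra.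
Qed.
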